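(* Let $0<a<1/2$, $a+1/2<b<1$, $K(n)\sim n^a$, $C_n=e^{n^{b-a}}$, and $$\mathcal F_n=\{(\theta_n,\rho):|\theta_{in}|\le C_n,\ i=1,\dots,K(n),\ |\rho|\le\log C_n\}.$$ With prior $p(\omega_n)=(2\pi\eta^2)^{-1/2}e^{-\rho^2/(2\eta^2)}\prod_{i=1}^{K(n)}(2\pi\zeta^2)^{-1/2}e^{-\theta_{in}^2/(2\zeta^2)}$ on $\omega_n=(\theta_n,\rho)$ (with $\eta,\zeta>0$ fixed), for every $\kappa>0$ we have $\int_{\mathcal F_n^c}p(\omega_n)d\omega_n\le e^{-n\kappa}$ for all sufficiently large $n$.
   Context: $\theta_n=(\theta_{1n},\dots,\theta_{K(n)n})\in\mathbb R^{K(n)}$ is the vector of network parameters and $\rho\in\mathbb R$ is the reparametrized scale parameter ($\sigma=\log(1+e^\rho)$); $K(n)\sim n^a$ means $K(n)$ grows at the rate $n^a$. *)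

From HB Require Import structures.
From mathcomp Require Import all_boot all_order all_algebra.
From mathcomp Require Import all_classical all_reals all_analysis.
Set Implicit Arguments. Unset Strict Implicit. Unset Printing Implicit Defensive.
Import Order.TTheory GRing.Theory Num.Theory.
Local Open Scope classical_set_scope.
Local Open Scope ring_scope.
Local Open Scope ereal_scope.

(* Iterated Lebesgue integral over R^k of a nonnegative extended-real
   function of a list of k reals (Tonelli form of the integral over R^k
   w.r.t. Lebesgue measure). *)
Fixpoint iter_integral (R : realType) (k : nat) (f : seq R -> \bar R) : \bar R :=
  match k with
  | 0 => f [::]
  | k'.+1 => \int[@lebesgue_measure R]_x iter_integral k' (fun v => f (x :: v))
  end.

Local Close Scope ereal_scope.

Definition gauss_dens (R : realType) (s x : R) : R :=
  (Num.sqrt (2 * pi * s ^+ 2))^-1 * expR (- (x ^+ 2) / (2 * s ^+ 2)).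

(* Parameter vector omega = (rho, theta_1, ..., theta_K) encoded as the list
   rho :: theta.  Prior density p(omega). *)
Definition prior_density (R : realType) (eta zeta : R) (w : seq R) : R :=
  match w with
  | [::] => 0
  | rho :: theta => gauss_dens eta rho * \prod_(t <- theta) gauss_dens zeta t
  end.

Definition sieve (R : realType) (C : R) : set (seq R) :=
  [set w | match w with
           | [::] => False
           | rho :: theta => `|rho| <= ln C /\ (forall t, t \in theta -> `|t| <= C)
           end].

Definition Cn (R : realType) (a b : R) (n : nat) : R := expR (n%:R `^ (b - a)).

Definition prior_mass_outside (R : realType) (eta zeta C : R) (K : nat) : \bar R :=
  iter_integral K.+1 (fun w => (\1_(~` sieve C) w * prior_density eta zeta w)%:E).

(* The complement of the sieve with [C = expR L] is contained in the union of
   the events [|w_i| > L] over the [K + 1] coordinates (using [L <= expR L] for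
   the [theta] coordinates).  On [|x| > L] a centred Gaussian density with
   standard deviation [s] is at most [sqrt 2 * expR (- L^2 / (4 s^2))] times
   the Gaussian density with standard deviation [sqrt 2 * s], so integrating
   out one coordinate at a time bounds the prior mass outside the sieve by
   [(K + 1) sqrt 2 expR (- L^2 / (4 (eta^2 + zeta^2)))].  For [L = n^(b - a)]
   we have [L^2 = n * n^(2 (b - a) - 1)] with a positive exponent, while
   [K + 1 = O(n)], so the bound eventually drops below [expR (- n kappa)]. *)

From HB Require Import structures.
From mathcomp Require Import all_boot all_order all_algebra.
From mathcomp Require Import all_classical all_reals all_analysis.
From mathcomp Require Import ring lra.
Set Implicit Arguments. Unset Strict Implicit. Unset Printing Implicit Defensive.
Import Order.TTheory GRing.Theory Num.Theory.
Local Open Scope ring_scope.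

Section iter_integral.
Variable R : realType.
Local Notation mu := (@lebesgue_measure R).

(* No measurability is needed: the integral of a nonnegative function is the
   supremum of the integrals of the simple functions below it. *)
Lemma ge0_le_integralT (f g : R -> \bar R) : (forall x, 0 <= f x)%E ->
  (forall x, f x <= g x)%E -> (\int[mu]_x f x <= \int[mu]_x g x)%E.
Proof.
move=> f0 fg; have g0 x : (0 <= g x)%E by exact: le_trans (f0 x) (fg x).
rewrite ge0_integralTE // ge0_integralTE //.
apply: ereal_sup_le => _ [h hf <-]; exists h => //= x.
exact: le_trans (hf x) (fg x).
Qed.

Lemma iter_integral_ge0 k (f : seq R -> \bar R) :
  (forall v, 0 <= f v)%E -> (0 <= iter_integral k f)%E.
Proof.
elim: k f => [|k IHk] f f0 //=.
by apply: integral_ge0 => x _; apply: IHk.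
Qed.

Lemma le_iter_integral k (f g : seq R -> \bar R) : (forall v, 0 <= f v)%E ->
  (forall v, f v <= g v)%E -> (iter_integral k f <= iter_integral k g)%E.
Proof.
elim: k f g => [|k IHk] f g f0 fg //=.
apply: ge0_le_integralT => x; first exact: iter_integral_ge0.
exact: IHk.
Qed.

End iter_integral.

Section product_density.
Variable R : realType.
Local Notation mu := (@lebesgue_measure R).

Definition is_pdf (f : R -> R) := [/\ forall x, 0 <= f x,
  mu.-integrable setT (EFin \o f) & (\int[mu]_x (f x)%:E = 1)%E].

Lemma integral_pdfD (f g : R -> R) (a b : R) : is_pdf f -> is_pdf g ->
  (\int[mu]_x (a * f x + b * g x)%:E = (a + b)%:E)%E.
Proof.
move=> [_ intf f1] [_ intg g1].
under eq_integral do rewrite EFinD !EFinM.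
rewrite integralD //=; last 2 first.
- exact: integrableZl.
- exact: integrableZl.
by rewrite !integralZl // f1 g1 !mule1.
Qed.

Fixpoint prod_dens (P : nat -> R -> R) (v : seq R) : R :=
  if v is x :: v' then P 0%N x * prod_dens (fun i => P i.+1) v' else 1.

Lemma prod_dens_ge0 (P : nat -> R -> R) v :
  (forall i x, 0 <= P i x) -> 0 <= prod_dens P v.
Proof.
elim: v P => [|x v IHv] P P0 //=.
by rewrite mulr_ge0 // IHv.
Qed.

Lemma prod_dens_const (f : R -> R) v : prod_dens (fun=> f) v = \prod_(t <- v) f t.
Proof. by elim: v => [|x v /= ->]; rewrite ?big_nil ?big_cons. Qed.

Lemma natr_orb (b1 b2 : bool) : (b1 || b2)%:R <= b1%:R + b2%:R :> R.
Proof. by case: b1; case: b2; rewrite /= ?addr0 ?add0r ?lerDl. Qed.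

Variable B : pred R.

Local Ltac nonneg := repeat first [done | apply: mulr_ge0 | apply: addr_ge0].

(* The affine form makes the induction on [k] go through: integrating out the
   first coordinate of [b * (has B v)%:R] produces such a combination. *)
Lemma iter_integral_affine_has_prod_dens k :
  forall (P Q : nat -> R -> R) (tau : nat -> R) (a b : R),
  (forall i, is_pdf (P i)) -> (forall i, is_pdf (Q i)) ->
  (forall i x, (B x)%:R * P i x <= tau i * Q i x) -> 0 <= a -> 0 <= b ->
  (iter_integral k (fun v => ((a + b * (has B v)%:R) * prod_dens P v)%:E)
     <= (a + b * \sum_(i < k) tau i)%:E)%E.
Proof.
elim: k => [|k IHk] P Q tau a b Ppdf Qpdf PQ a0 b0.
  by rewrite /= big_ord0 mulr0 addr0 mulr1 lee_fin.
have P0 i x : 0 <= P i x by case: (Ppdf i).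
have PP0 v : 0 <= prod_dens (fun i => P i.+1) v by exact: prod_dens_ge0.
set tau' := fun i => tau i.+1; set S := \sum_(i < k) tau' i.
rewrite big_ord_recl -/S /=.
have -> : a + b * (tau 0%N + S) = (a + b * S) + b * tau 0%N by ring.
rewrite -(integral_pdfD _ _ (Ppdf 0%N) (Qpdf 0%N)).
apply: ge0_le_integralT => x.
  by apply: iter_integral_ge0 => v; rewrite lee_fin; nonneg.
pose Bx : R := (B x)%:R; set p := P 0%N x.
have p0 : 0 <= p := P0 0%N x.
apply: (@le_trans _ _ (iter_integral k (fun v =>
    (((a + b * Bx) * p + b * p * (has B v)%:R) * prod_dens (fun i => P i.+1) v)%:E))).
  apply: le_iter_integral => v.
    by rewrite lee_fin; nonneg.
  rewrite lee_fin mulrA ler_wpM2r //.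
  have := natr_orb (B x) (has B v); rewrite -/Bx.
  have := mulr_ge0 b0 p0; nra.
apply: le_trans.
  by apply: (IHk _ (fun i => Q i.+1) tau') => [i|i|i y||];
    [exact: Ppdf | exact: Qpdf | exact: PQ | nonneg | nonneg].
rewrite lee_fin; have := PQ 0%N x; rewrite -/Bx -/p -/S; nra.
Qed.

Lemma iter_integral_has_prod_dens k (P Q : nat -> R -> R) (tau : nat -> R) :
  (forall i, is_pdf (P i)) -> (forall i, is_pdf (Q i)) ->
  (forall i x, (B x)%:R * P i x <= tau i * Q i x) ->
  (iter_integral k (fun v => ((has B v)%:R * prod_dens P v)%:E)
     <= (\sum_(i < k) tau i)%:E)%E.
Proof.
move=> Ppdf Qpdf PQ.
have := iter_integral_affine_has_prod_dens k Ppdf Qpdf PQ (lexx 0) ler01.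
by rewrite add0r mul1r; under eq_fun do rewrite add0r mul1r.
Qed.

End product_density.

Section gaussian.
Variable R : realType.

Lemma gauss_dens_ge0 (s x : R) : 0 <= gauss_dens s x.
Proof. by rewrite /gauss_dens mulr_ge0 ?invr_ge0 ?sqrtr_ge0 ?expR_ge0. Qed.

Lemma gauss_densE (s : R) : s != 0 -> gauss_dens s = normal_pdf 0 s.
Proof.
move=> s0; apply/funext => x.
rewrite normal_pdfE //= /normal_peak /normal_fun subr0.
by congr (_ ^-1 * expR (_ / _)); first congr Num.sqrt; rewrite mulr2n; ring.
Qed.

Lemma is_pdf_gauss_dens (s : R) : s != 0 -> is_pdf (gauss_dens s).
Proof.
move=> s0; split; first exact: gauss_dens_ge0.
- by rewrite gauss_densE //; exact: integrable_normal_pdf.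
- by rewrite gauss_densE //; exact: integral_normal_pdf.
Qed.

(* Doubling the variance halves the exponent, which leaves room for the
   factor [expR (- L^2 / (4 s^2))] on [|x| > L]. *)
Lemma gauss_dens_tail (s L x : R) : 0 < s -> 0 <= L ->
  (L < `|x|)%R%:R * gauss_dens s x <=
  Num.sqrt 2 * expR (- (L ^+ 2 / (4 * s ^+ 2))) * gauss_dens (Num.sqrt 2 * s) x.
Proof.
move=> s0 L0; have s20 : 0 < s ^+ 2 by rewrite exprn_gt0.
have sqrt2_gt0 : 0 < Num.sqrt 2 :> R by rewrite sqrtr_gt0.
set c := Num.sqrt (2 * pi * s ^+ 2).
have c0 : 0 < c by rewrite sqrtr_gt0 !mulr_gt0 // pi_gt0.
have wideE : Num.sqrt 2 * gauss_dens (Num.sqrt 2 * s) x =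
    c^-1 * expR (- (x ^+ 2) / (4 * s ^+ 2)).
  rewrite /gauss_dens exprMn sqr_sqrtr //.
  have -> : 2 * pi * (2 * s ^+ 2) = 2 * (2 * pi * s ^+ 2) by ring.
  rewrite sqrtrM // -/c invfM !mulrA mulfV ?gt_eqF // mul1r.
  by congr (_ * expR (_ / _)); ring.
have [Lx|_] := ltP L `|x|; last first.
  by rewrite mul0r !mulr_ge0 ?sqrtr_ge0 ?expR_ge0 ?gauss_dens_ge0.
rewrite mul1r mulrAC wideE -mulrA /gauss_dens -/c ler_pM2l ?invr_gt0 //.
rewrite -expRD ler_expR.
have Lx2 : L ^+ 2 <= x ^+ 2.
  by rewrite -[x ^+ 2]real_normK ?num_real //; have := normr_ge0 x; nra.
have -> : - x ^+ 2 / (4 * s ^+ 2) - L ^+ 2 / (4 * s ^+ 2) =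
    - x ^+ 2 / (2 * s ^+ 2) + (x ^+ 2 - L ^+ 2) / (4 * s ^+ 2).
  by field; rewrite gt_eqF.
by rewrite lerDl divr_ge0 ?subr_ge0 // mulr_ge0 // ltW.
Qed.

End gaussian.

Section prior.
Variables (R : realType) (eta zeta : R).
Local Open Scope classical_set_scope.

Definition prior_sd (i : nat) : R := if i is 0%N then eta else zeta.

Local Notation prior_coord_dens := (fun i => gauss_dens (prior_sd i)).

Lemma prior_densityE rho th :
  prior_density eta zeta (rho :: th) = prod_dens prior_coord_dens (rho :: th).
Proof. by rewrite /= (prod_dens_const (gauss_dens zeta)). Qed.

Lemma prior_density_ge0 w : 0 <= prior_density eta zeta w.
Proof.
case: w => // rho th; rewrite prior_densityE prod_dens_ge0 // => i x.
exact: gauss_dens_ge0.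
Qed.

Lemma not_sieve_expR (L rho : R) th : ~ sieve (expR L) (rho :: th) ->
  has (fun t => L < `|t|) (rho :: th).
Proof.
apply: contra_notT => /hasPn small; split=> [|t tth].
  by rewrite expRK leNgt small ?mem_head.
have := small t (mem_behead (s := rho :: th) tth).
rewrite -leNgt => /le_trans; apply.
by apply: le_trans (expR_ge1Dx L); rewrite lerDr.
Qed.

Lemma indic_prior_density_le (L : R) w :
  \1_(~` sieve (expR L)) w * prior_density eta zeta w <=
  (has (fun t => L < `|t|) w)%:R * prod_dens prior_coord_dens w.
Proof.
case: w => [|rho th]; first by rewrite /= mulr0 mul0r.
rewrite prior_densityE indicE.
case: (boolP (_ \in _)) => [/set_mem/not_sieve_expR -> //|_].
by rewrite mul0r mulr_ge0 // -prior_densityE prior_density_ge0.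
Qed.

Lemma prior_mass_outside_expR_le (L : R) K : 0 < eta -> 0 < zeta -> 0 <= L ->
  (prior_mass_outside eta zeta (expR L) K <=
   (K.+1%:R * (Num.sqrt 2 * expR (- (L ^+ 2 / (4 * (eta ^+ 2 + zeta ^+ 2))))))%:E)%E.
Proof.
move=> eta0 zeta0 L0.
have sd0 i : 0 < prior_sd i by case: i.
have sd_le i : prior_sd i ^+ 2 <= eta ^+ 2 + zeta ^+ 2.
  by case: i => [|i] /=; rewrite ?lerDl ?lerDr sqr_ge0.
apply: (@le_trans _ _ (iter_integral K.+1 (fun w =>
    ((has (fun t => L < `|t|) w)%:R * prod_dens prior_coord_dens w)%:E))).
  apply: le_iter_integral => w; last by rewrite lee_fin indic_prior_density_le.
  by rewrite lee_fin mulr_ge0 ?prior_density_ge0.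
apply: le_trans.
  apply: (iter_integral_has_prod_dens _
    (Q := fun i => gauss_dens (Num.sqrt 2 * prior_sd i))) => i.
  - by apply: is_pdf_gauss_dens; rewrite gt_eqF.
  - by apply: is_pdf_gauss_dens; rewrite mulf_neq0 // gt_eqF ?sqrtr_gt0.
  - by move=> x; exact: gauss_dens_tail.
rewrite lee_fin mulr_natl -[in leRHS](card_ord K.+1) -sumr_const ler_sum // => i _.
rewrite ler_pM2l ?sqrtr_gt0 // ler_expR lerN2 ler_wpM2l ?sqr_ge0 //.
have s0 : 0 < eta ^+ 2 + zeta ^+ 2 by rewrite addr_gt0 ?exprn_gt0.
by rewrite lef_pV2 ?posrE ?mulr_gt0 ?exprn_gt0 // ler_pM2l.
Qed.

End prior.

Section asymptotics.
Variable R : realType.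

Lemma mul_expRN_le (A c t kappa x : R) : 0 <= x -> A <= c * x -> kappa + c <= t ->
  A * expR (- (x * t)) <= expR (- (x * kappa)).
Proof.
move=> x0 Acx ct.
have A_le : A <= expR (c * x).
  by apply: le_trans Acx (le_trans _ (expR_ge1Dx _)); rewrite lerDr.
apply: le_trans (ler_wpM2r (expR_ge0 _) A_le) _.
by rewrite -expRD ler_expR; nra.
Qed.

Lemma eventually_ge_powR (M d : R) : 0 < d ->
  exists N, forall n, (N <= n)%N -> M <= n%:R `^ d.
Proof.
move=> d0; have [M0|M0] := leP M 0.
  by exists 0%N => n _; exact: le_trans M0 (powR_ge0 _ _).
exists (Num.truncn (M `^ d^-1)).+1 => n Nn.
have Mn : M `^ d^-1 <= n%:R.
  by apply: le_trans (ltW (truncnS_gt _)) _; rewrite ler_nat.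
have := ge0_ler_powR (ltW d0) (powR_ge0 _ _) (ler0n _ _) Mn.
by rewrite -powRrM mulVf ?gt_eqF // (@powRr1 _ M) // ltW.
Qed.

Lemma sqr_powR (x e : R) : 0 < x -> (x `^ e) ^+ 2 = x * x `^ (2 * e - 1).
Proof.
move=> x0; rewrite -powR_mulrn ?powR_ge0 // -powRrM.
have -> : e * 2%:R = 1 + (2 * e - 1) by ring.
by rewrite powRD ?(powRr1 (ltW x0)) // (lt0r_neq0 x0) implybT.
Qed.

End asymptotics.

Theorem lemma20 (R : realType) (a b eta zeta : R) (K : nat -> nat) :
  0 < a -> a < 1 / 2 -> a + 1 / 2 < b -> b < 1 ->
  0 < eta -> 0 < zeta ->
  (exists c1 c2 : R, 0 < c1 /\ 0 < c2 /\ exists N : nat, forall n : nat, (N <= n)%N ->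
     c1 * n%:R `^ a <= (K n)%:R /\ (K n)%:R <= c2 * n%:R `^ a) ->
  forall kappa : R, 0 < kappa ->
  exists N : nat, forall n : nat, (N <= n)%N ->
    (prior_mass_outside eta zeta (Cn a b n) (K n) <= (expR (- (n%:R * kappa)))%:E)%E.
Proof.
move=> _ a_lt b_gt _ eta0 zeta0 [c1 [c2 [_ [c20 [N hK]]]]] kappa kappa0.
set s := eta ^+ 2 + zeta ^+ 2; set d := 2 * (b - a) - 1; set c := 2 * (c2 + 1).
have s0 : 0 < s by rewrite addr_gt0 ?exprn_gt0.
have d0 : 0 < d by rewrite /d; lra.
have [N' hM] := eventually_ge_powR (4 * s * (kappa + c)) d0.
exists (maxn (maxn N N') 1) => n; rewrite !geq_max => /andP [/andP [nN nN'] n1].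
have n1R : 1 <= n%:R :> R by rewrite ler1n.
apply: le_trans (prior_mass_outside_expR_le _ eta0 zeta0 (powR_ge0 _ _)) _.
rewrite lee_fin sqr_powR ?(lt_le_trans ltr01) // -/d -/s mulrA -[_ * _ / _]mulrA.
apply: (mul_expRN_le (c := c)) => //.
  have na : n%:R `^ a <= n%:R by apply: ler1_powR => //; lra.
  have Kn : (K n).+1%:R <= (c2 + 1) * n%:R.
    by have := (hK n nN).2; rewrite -natr1; nra.
  have sqrt2_le2 : Num.sqrt 2 <= 2 :> R.
    by have := sqr_sqrtr (ler0n R 2); have := sqrtr_ge0 (2 : R); nra.
  apply: le_trans (ler_pM _ (sqrtr_ge0 _) Kn sqrt2_le2) _ => //.
  by rewrite /c; lra.
by rewrite ler_pdivlMr ?mulr_gt0 // mulrC; exact: hM.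
Qed.
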